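(* Let $A$ be a commutative unital $\mathbb K$-algebra, let $B=\mathrm{Diff}^1(A)$, and let $\mu\in L^2(B)$ be the commutator $\mu(u,v)=u\circ v-v\circ u$ of $\mathbb K$-linear endomorphisms of $A$. Then for every $n\ge 1$ and every $\omega\in\Omega^n(A)$, the element $[\mu,\omega]\in L^{n+1}(B)$ belongs to $\Omega^{n+1}(A)$, and $$[\mu,\omega]=-\,d\omega ,$$ i.e. for all $X_1,\dots,X_{n+1}\in \mathrm{Der}^1(A)$, $$[\mu,\omega](X_1,\dots,X_{n+1})=-\Big(\sum_{i=1}^{n+1}(-1)^{i-1}X_i\big(\omega(X_1,\dots,\widehat{X_i},\dots,X_{n+1})\big)+\sum_{i<j}(-1)^{i+j}\omega([X_i,X_j],X_1,\dots,\widehat{X_i},\dots,\widehat{X_j},\dots,X_{n+1})\Big).$$ In particular $\Omega(A)=\bigoplus_{n\ge1}\Omega^n(A)$ is invariant under $\partial_\mu=[\mu,\cdot\,]$.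
   Context: $\mathbb K$ denotes $\mathbb R$ or $\mathbb C$. For a $\mathbb K$-vector space $V$ and $k\ge1$, $L^k(V)$ is the space of $\mathbb K$-multilinear alternating maps $V^k\to V$; $L^0(V)=V$ and $L(V)=\bigoplus_{k\ge0}L^k(V)$. The compositional product of $\alpha\in L^m(V)$ and $\beta\in L^n(V)$ (with $m\ge 1$) is $\alpha\circ\beta\in L^{m+n-1}(V)$, $$(\alpha\circ\beta)(u_1,\dots,u_{m+n-1})=\sum_{s}\operatorname{sgn}(s)\,\alpha\big(\beta(u_{s(1)},\dots,u_{s(n)}),u_{s(n+1)},\dots,u_{s(m+n-1)}\big),$$ the sum running over permutations $s$ of $\{1,\dots,m+n-1\}$ with $s(1)<\dots<s(n)$ and $s(n+1)<\dots<s(m+n-1)$; if $m=0$ one sets $\alpha\circ\beta=0$. The bracket on $L(V)$ is, for $\alpha\in L^m(V)$, $\beta\in L^n(V)$, $$[\alpha,\beta]=(-1)^{(m+1)n}\alpha\circ\beta+(-1)^m\beta\circ\alpha .$$ For a commutative unital $\mathbb K$-algebra $A$: $\mathrm{Der}^1(A)$ is the space of $\mathbb K$-linear derivations of $A$; $A$ is identified with the multiplication operators $b\mapsto ab$ inside $\mathrm{End}_{\mathbb K}(A)$; $\mathrm{Diff}^1(A)$ is the set of $\varphi\in\mathrm{End}_{\mathbb K}(A)$ such that the commutator $\varphi\circ a-a\circ\varphi$ is a multiplication operator for every $a\in A$; one has $\mathrm{Diff}^1(A)=\mathrm{Der}^1(A)\oplus A$ via $\varphi=(\varphi-\varphi(1))+\varphi(1)$.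 For $n\ge1$, $\Omega^n(A)\subset L^n(\mathrm{Diff}^1(A))$ is the set of $\omega$ such that: (i) $\omega$ takes values in $A\subset \mathrm{Diff}^1(A)$; (ii) $\omega(u_1,\dots,u_n)=0$ whenever some $u_i$ lies in $A$; (iii) $\omega(au_1,u_2,\dots,u_n)=a\,\omega(u_1,\dots,u_n)$ for $a\in A$ and $u_1,\dots,u_n\in\mathrm{Der}^1(A)$. Such an $\omega$ is determined by its values on $\mathrm{Der}^1(A)$, and $d\omega$ denotes the element of $\Omega^{n+1}(A)$ given on derivations by the usual formula displayed in the claim (with $[X_i,X_j]$ the commutator of derivations). *)

From HB Require Import structures.
From mathcomp Require Import all_boot all_order all_algebra all_fingroup.
From mathcomp Require Import reals complex.
Set Implicit Arguments. Unset Strict Implicit. Unset Printing Implicit Defensive.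
Import Order.TTheory GRing.Theory Num.Theory.
Local Open Scope ring_scope.

Section Diff.
Variables (K : fieldType) (A : comAlgType K).

(* Elements of End_K(A) are represented as functions A -> A satisfying Klinear. *)
Definition Klinear (f : A -> A) : Prop :=
  forall (k : K) (x y : A), f (k *: x + y) = k *: f x + f y.

Definition mulop (c : A) : A -> A := fun b => c * b.

(* phi is a multiplication operator, i.e. lies in A ⊂ End_K(A) *)
Definition isMult (phi : A -> A) : Prop := exists c : A, phi = mulop c.

Definition isDer (X : A -> A) : Prop :=
  Klinear X /\ forall a b : A, X (a * b) = a * X b + X a * b.

Definition isDiff1 (phi : A -> A) : Prop :=
  Klinear phi /\ forall a : A, isMult (fun b => phi (a * b) - a * phi b).

(* k-ary maps on End_K(A); only their values on Diff^1(A)-tuples matter. *)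
Definition Lmap (k : nat) := ('I_k -> A -> A) -> A -> A.

Definition inL (k : nat) (al : Lmap k) : Prop :=
  (forall u : 'I_k -> A -> A, (forall i, isDiff1 (u i)) -> isDiff1 (al u)) /\
  (forall (u : 'I_k -> A -> A) (i : 'I_k) (x y : A -> A) (c : K),
      (forall j, isDiff1 (u j)) -> isDiff1 x -> isDiff1 y ->
      al (fun j => if j == i then (fun b => c *: x b + y b) else u j)
      = (fun b => c *: al (fun j => if j == i then x else u j) b
                  + al (fun j => if j == i then y else u j) b)) /\
  (forall (u : 'I_k -> A -> A) (i j : 'I_k),
      (forall l, isDiff1 (u l)) -> i != j -> u i = u j -> al u = (fun _ => 0)).

Definition inOmega (n : nat) (om : Lmap n) : Prop :=
  inL om /\
  (forall u : 'I_n -> A -> A, (forall i, isDiff1 (u i)) -> isMult (om u)) /\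
  (forall u : 'I_n -> A -> A, (forall i, isDiff1 (u i)) ->
      (exists i, isMult (u i)) -> om u = (fun _ => 0)) /\
  (forall (u : 'I_n -> A -> A) (a : A), (forall i, isDer (u i)) ->
      forall i0 : 'I_n, val i0 = 0%N ->
      om (fun j => if j == i0 then (fun b => a * u j b) else u j)
      = (fun b => a * om u b)).

Definition ext (p : nat) (u : 'I_p -> A -> A) (k : nat) : A -> A :=
  if insub k is Some i then u i else (fun _ => 0).

(* (s(1)<...<s(n)) and (s(n+1)<...<s(m+n-1)), in 0-based indexing *)
Definition shuffle (p n : nat) (s : 'S_p) : bool :=
  [forall i : 'I_p, forall j : 'I_p,
     ((i < j)%N && ((j < n)%N || (n <= i)%N)) ==> (s i < s j)%N].

Definition comp (m n : nat) (al : Lmap m) (be : Lmap n) : Lmap (m + n).-1 :=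
  fun u => if m is 0 then (fun _ => 0) else
   fun a => \sum_(s : 'S_((m + n).-1) | shuffle n s)
     (-1) ^+ odd_perm s *
       al (fun k : 'I_m =>
             if val k == 0%N then be (fun l : 'I_n => ext (u \o s) l)
             else ext (u \o s) (n + k.-1)) a.

Definition bracket (m n : nat) (al : Lmap m) (be : Lmap n) : Lmap (m + n).-1 :=
  fun u a =>
    (-1) ^+ ((m + 1) * n) * comp al be u a
    + (-1) ^+ m * comp be al (fun k => u (cast_ord (congr1 predn (addnC n m)) k)) a.

Definition mu : Lmap 2 := fun u b => u ord0 (u ord_max b) - u ord_max (u ord0 b).

(* d omega on derivations X_1..X_{n+1} (0-based indices), as an element of A;
   an element of Omega is identified with the element om(..)(1) of A. *)
Definition dOmega (n : nat) (om : Lmap n) (X : 'I_n.+1 -> A -> A) : A :=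
  \sum_(i < n.+1) (-1) ^+ i * X i (om (fun k : 'I_n => X (inord (bump i k))) 1)
  + \sum_(i < n.+1) \sum_(j < n.+1 | (i < j)%N)
      (-1) ^+ (i + j) *
        om (fun k : 'I_n =>
              if val k == 0%N then (fun b => X i (X j b) - X j (X i b))
              else X (inord (bump i (bump j.-1 k.-1)))) 1.

End Diff.

Definition claim (K : fieldType) : Prop :=
  forall (A : comAlgType K) (n : nat) (om : Lmap A n), (1 <= n)%N ->
    inOmega om ->
    inOmega (n := n.+1) (bracket (@mu K A) om) /\
    forall X : 'I_n.+1 -> A -> A, (forall i, isDer (X i)) ->
      bracket (@mu K A) om X = mulop (- dOmega om X).

From Pilot Require Import Defs.
From mathcomp Require Import all_boot all_algebra all_fingroup reals complex.
From mathcomp Require Import zify ring.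
From Stdlib Require Import FunctionalExtensionality.
Set Implicit Arguments. Unset Strict Implicit. Unset Printing Implicit Defensive.
Import GRing.Theory.

(* On arguments u_0, .., u_n in Diff^1(A), the shuffles in [mu o om] put one
   argument u_k in front of the value c of [om] on the others, and those in
   [om o mu] put a commutator [u_i, u_j] in the first slot of [om]. Since [om]
   takes values in A and [c, u] = -(u - u(1))(c) for c in A, [[mu, om]] is
   multiplication by minus the Koszul formula for [d om] in which the
   derivations acting on values of [om] are replaced by the derivation parts
   u_k - u_k(1); on derivations this is -d om. The conditions defining
   Omega^{n+1} are then checked on that formula: it is multilinear; it
   vanishes when an argument is a multiplication operator, whose derivation
   part is 0 and whose commutators with Diff^1(A) are multiplication operators;
   it vanishes when two adjacent arguments agree, the surviving terms
   cancelling in pairs, hence it is alternating; and it is A-linear in the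
   first argument, the Leibniz-rule defects of its two sums cancelling. *)

Lemma sum_ltn_ord M v : (\sum_(j < M) (j < v))%N = minn v M.
Proof.
elim: M => [|M IH]; first by rewrite big_ord0 minn0.
rewrite big_ord_recr /= IH; lia.
Qed.

Lemma perm_val_count M (s : 'S_M) (x : 'I_M) : s x = (\sum_(j < M) (s j < s x))%N :> nat.
Proof.
rewrite -(reindex_inj (@perm_inj _ s) (P := xpredT) (F := fun j : 'I_M => nat_of_bool (j < s x))).
by rewrite /= sum_ltn_ord; have := ltn_ord (s x); lia.
Qed.

Lemma sum_ltn_block M p (x : 'I_M) :
  (\sum_(j < M | (j < p) == (x < p)) (j < x))%N = if (x < p)%N then (x : nat) else (x - p)%N.
Proof.
suff sum_m : forall m, (\sum_(j < m) (if (j < p) == (x < p) then nat_of_bool (j < x) else 0) =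
    if (x < p)%N then minn x m else minn x m - minn p m)%N.
  by rewrite big_mkcond sum_m; have := ltn_ord x; case: (ltnP x p); lia.
elim=> [|m IH]; first by rewrite big_ord0; case: ifP.
by rewrite big_ord_recr /= IH; case: (ltnP x p); case: (ltnP m p) => /=; lia.
Qed.

Section Shuffles.
Variables (p M : nat) (s : 'S_M).
Hypothesis hs : shuffle p s.

Lemma shuffle_lt (i j : 'I_M) : (i < j)%N -> (j < p)%N || (p <= i)%N -> (s i < s j)%N.
Proof. by move=> hij hb; have /implyP := forallP (forallP hs i) j; apply; rewrite hij. Qed.

Lemma shuffle_ltE (i j : 'I_M) : (i < p)%N = (j < p)%N -> (s i < s j)%N = (i < j)%N.
Proof.
move=> e; case: (ltngtP i j) => hij.
- apply: shuffle_lt => //; case: (ltnP j p) => //= hjp.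
  by move: e; case: (ltnP i p) => // _; rewrite ltnNge hjp.
- apply/negbTE; rewrite -leqNgt ltnW // shuffle_lt //.
  by move: e; case: (ltnP i p) => // _ e; rewrite leqNgt -e.
- by rewrite (val_inj hij) ltnn.
Qed.

Lemma shuffle_valE (x : 'I_M) :
  s x = ((if (x < p)%N then (x : nat) else x - p) + \sum_(j < M | (j < p) != (x < p)) (s j < s x))%N :> nat.
Proof.
transitivity (\sum_(j < M) (s j < s x))%N; first exact: perm_val_count.
rewrite (bigID (fun j : 'I_M => (j < p) == (x < p))) /= -(@sum_ltn_block M p x).
by congr (_ + _); apply: eq_bigr => j /eqP e; rewrite shuffle_ltE.
Qed.
End Shuffles.

Section LastShuffle.
Variable N : nat.

Definition shuffle1 (k : 'I_N.+1) : 'S_N.+1 := lift_perm ord_max k 1.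

Lemma shuffle1_last k : shuffle1 k ord_max = k.
Proof. exact: lift_perm_id. Qed.

Lemma shuffle1E k (x : 'I_N.+1) : (x < N)%N -> shuffle1 k x = bump k x :> nat.
Proof.
move=> hx; have -> : x = lift ord_max (Ordinal hx) by apply: val_inj; rewrite /= /bump; lia.
by rewrite /shuffle1 lift_perm_lift perm1 /= /bump; lia.
Qed.

Lemma odd_shuffle1 k : odd_perm (shuffle1 k) = odd N (+) odd k.
Proof. by rewrite /shuffle1 odd_lift_perm odd_perm1 addbF. Qed.

Lemma shuffle1_shuffle k : shuffle N (shuffle1 k).
Proof.
apply/forallP => i; apply/forallP => j; apply/implyP => /andP[hij /orP[hj|hi]].
  by rewrite !shuffle1E /bump; lia.
by have := ltn_ord j; lia.
Qed.

Lemma shuffle1_eq s : shuffle N s -> s = shuffle1 (s ord_max).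
Proof.
move=> hs; apply/permP => x; case: (eqVneq x ord_max) => [->|nx]; first by rewrite shuffle1_last.
have hx : (x < N)%N by have := ltn_ord x; move: nx; rewrite -val_eqE /=; lia.
apply: val_inj; rewrite /= shuffle1E //.
have := shuffle_valE hs x; rewrite hx (big_pred1 ord_max); last first.
  by move=> j; rewrite /= -val_eqE /=; have := ltn_ord j; case: ltngtP; lia.
have : s x != s ord_max by rewrite (inj_eq (@perm_inj _ s)).
rewrite -val_eqE /= /bump; lia.
Qed.

Lemma big_shuffle1 (R : nmodType) (G : 'S_N.+1 -> R) :
  (\sum_(s | shuffle N s) G s = \sum_(k < N.+1) G (shuffle1 k))%R.
Proof.
rewrite (reindex_onto shuffle1 (fun s => s ord_max)) /=; last by move=> s /shuffle1_eq <-.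
by apply: eq_bigl => k; rewrite shuffle1_shuffle shuffle1_last eqxx.
Qed.
End LastShuffle.

Section PairShuffle.
Variable N : nat.

Definition shuffle2 (i j : 'I_N.+2) : 'S_N.+2 :=
  lift_perm ord0 i (lift_perm ord0 (inord j.-1) 1).

Definition ord_one : 'I_N.+2 := lift ord0 ord0.

Lemma shuffle2_0 i j : shuffle2 i j ord0 = i.
Proof. exact: lift_perm_id. Qed.

Lemma shuffle2E (i j x : 'I_N.+2) : (i < j)%N ->
  shuffle2 i j x = (if x == 0 :> nat then i : nat else if x == 1 :> nat then j : nat
                    else bump i (bump j.-1 (x - 2))) :> nat.
Proof.
move=> hij; have hj := ltn_ord j.
case: (eqVneq (x : nat) 0) => [hx0|hx0].
  by rewrite (_ : x = ord0) ?shuffle2_0 //; apply: val_inj.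
have hx1 : (x.-1 < N.+1)%N by have := ltn_ord x; lia.
have -> : x = lift ord0 (Ordinal hx1) by apply: val_inj; rewrite /= /bump; lia.
rewrite /shuffle2 lift_perm_lift /=.
case: (eqVneq x.-1 0) => [hy0|hy0].
  have -> : Ordinal hx1 = ord0 by apply: val_inj.
  rewrite lift_perm_id /= inordK; last by lia.
  by rewrite /bump; case: ifP => /eqP; lia.
have hx2 : (x.-2 < N)%N by have := ltn_ord x; lia.
have -> : Ordinal hx1 = lift ord0 (Ordinal hx2) by apply: val_inj; rewrite /= /bump; lia.
rewrite lift_perm_lift perm1 /= inordK; last by lia.
by rewrite /bump; case: ifP => /eqP; lia.
Qed.

Lemma odd_shuffle2 (i j : 'I_N.+2) : (0 < j)%N -> odd_perm (shuffle2 i j) = odd i (+) odd j.-1.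
Proof.
move=> hj; rewrite /shuffle2 !odd_lift_perm odd_perm1 inordK; last by have := ltn_ord j; lia.
by rewrite /= addbF.
Qed.

Lemma shuffle2_shuffle (i j : 'I_N.+2) : (i < j)%N -> shuffle 2 (shuffle2 i j).
Proof.
move=> hij; apply/forallP => a; apply/forallP => b; apply/implyP => /andP[hab hb].
rewrite !shuffle2E //; move: hab hb; rewrite /bump.
by case: (eqVneq (a : nat) 0); case: (eqVneq (a : nat) 1);
   case: (eqVneq (b : nat) 0); case: (eqVneq (b : nat) 1) => /=; lia.
Qed.

Lemma shuffle2_eq s : shuffle 2 s -> s = shuffle2 (s ord0) (s ord_one).
Proof.
move=> hs; have h01 : (s ord0 < s ord_one)%N by apply: (shuffle_lt hs).
apply/permP => x; apply: val_inj; rewrite /= shuffle2E //.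
case: (eqVneq (x : nat) 0) => [hx0|hx0]; first by rewrite (_ : x = ord0) //; apply: val_inj.
case: (eqVneq (x : nat) 1) => [hx1|hx1]; first by rewrite (_ : x = ord_one) //; apply: val_inj.
have hx : (x < 2)%N = false by lia.
have := shuffle_valE hs x; rewrite hx (bigD1 ord0) // (bigD1 ord_one) // big_pred0; last first.
  by move=> j; rewrite /= -!val_eqE /= /bump; case: (j : nat) => [|[|]].
have : s x != s ord0 by rewrite (inj_eq (@perm_inj _ s)) -val_eqE /=.
have : s x != s ord_one by rewrite (inj_eq (@perm_inj _ s)) -val_eqE /=.
rewrite -!val_eqE /= /bump; lia.
Qed.

Lemma big_shuffle2 (R : nmodType) (G : 'S_N.+2 -> R) :
  (\sum_(s | shuffle 2 s) G s = \sum_(i < N.+2) \sum_(j < N.+2 | (i < j)%N) G (shuffle2 i j))%R.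
Proof.
rewrite pair_big_dep /= (reindex_onto (fun p : 'I_N.+2 * 'I_N.+2 => shuffle2 p.1 p.2)
  (fun s => (s ord0, s ord_one))) /=; last by move=> s /shuffle2_eq <-.
apply: eq_bigl => -[i j] /=; rewrite shuffle2_0; apply/idP/idP.
  case/andP=> hs /eqP[e].
  by have := shuffle_lt hs (i := ord0) (j := ord_one); rewrite shuffle2_0 e; apply.
move=> hij; rewrite shuffle2_shuffle //=.
have -> : shuffle2 i j ord_one = j by apply: val_inj; rewrite /= shuffle2E.
by rewrite eqxx.
Qed.
End PairShuffle.

Local Open Scope ring_scope.

Section Diff1.
Variables (K : fieldType) (A : comAlgType K).
Local Notation F := (A -> A).
Local Notation D := (@isDiff1 K A).

Lemma Klinear_add (f : F) : Klinear f -> {morph f : x y / x + y}.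
Proof. by move=> hf x y; have := hf 1 x y; rewrite !scale1r. Qed.

Lemma Klinear0 (f : F) : Klinear f -> f 0 = 0.
Proof. by move=> hf; apply/esym/(addrI (f 0)); rewrite -Klinear_add // !addr0. Qed.

Lemma KlinearZ (f : F) : Klinear f -> forall k x, f (k *: x) = k *: f x.
Proof. by move=> hf k x; have := hf k x 0; rewrite !addr0 Klinear0 // addr0. Qed.

Lemma KlinearN (f : F) : Klinear f -> {morph f : x / - x}.
Proof. by move=> hf x; rewrite -scaleN1r KlinearZ // scaleN1r. Qed.

(* [der_part phi] is the component [phi - phi(1)] of [phi] in Der^1(A). *)
Definition der_part (phi : F) (a : A) : A := phi a - a * phi 1.
Definition commop (phi psi : F) : F := fun b => phi (psi b) - psi (phi b).
Definition lcomb (c : K) (f g : F) : F := fun b => c *: f b + g b.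

Lemma isDiff1_mul (phi : F) : D phi -> forall a b, phi (a * b) = a * phi b + der_part phi a * b.
Proof.
case=> _ h a b; case: (h a) => c hc.
have h1 := congr1 (fun g => g 1) hc; have hb := congr1 (fun g => g b) hc.
rewrite /= /mulop mulr1 in h1 hb.
by rewrite /der_part h1 mulr1 -hb addrC subrK.
Qed.

Lemma isDiff1_intro (phi : F) : Klinear phi ->
  (forall a b, phi (a * b) = a * phi b + der_part phi a * b) -> D phi.
Proof.
move=> hl h; split=> // a; exists (der_part phi a); apply: functional_extensionality => b.
by rewrite /mulop h addrC addKr.
Qed.

Lemma isDiff1_Klinear (phi : F) : D phi -> Klinear phi.
Proof. by case. Qed.

Lemma isDer_1 (X : F) : isDer X -> X 1 = 0.
Proof.
case=> _ h; apply/esym/(addrI (X 1)).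
by rewrite addr0 -[in LHS](mulr1 1) h mulr1 mul1r.
Qed.

Lemma der_part_Der (X : F) a : isDer X -> der_part X a = X a.
Proof. by move=> hX; rewrite /der_part isDer_1 // mulr0 subr0. Qed.

Lemma isDer_Diff1 (X : F) : isDer X -> D X.
Proof.
move=> hX; have [hl h] := hX; apply: isDiff1_intro => // a b.
by rewrite h der_part_Der.
Qed.

Lemma isDiff1_mulop c : D (mulop c).
Proof.
apply: isDiff1_intro => [k x y|a b]; rewrite /mulop /der_part.
  by rewrite mulrDr scalerAr.
rewrite mulr1; ring.
Qed.

Lemma isDiff1_lcomb (k : K) (x y : F) : D x -> D y -> D (lcomb k x y).
Proof.
move=> hx hy; apply: isDiff1_intro => [c u v|a b]; rewrite /lcomb /der_part.
  rewrite (isDiff1_Klinear hx) (isDiff1_Klinear hy) !scalerDr !scalerA [k * c]mulrC.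
  by rewrite addrACA.
rewrite (isDiff1_mul hx) (isDiff1_mul hy) /der_part -[k *: (_ + _)]mulr_algl.
rewrite -[k *: x b]mulr_algl -[k *: x a]mulr_algl -[k *: x 1]mulr_algl; ring.
Qed.

Lemma isDiff1_commop (p q : F) : D p -> D q -> D (commop p q).
Proof.
move=> hp hq; have lp := isDiff1_Klinear hp; have lq := isDiff1_Klinear hq.
apply: isDiff1_intro => [c u v|a b]; rewrite /commop /der_part.
  rewrite (lq c u v) (lp c u v) lp lq scalerBr.
  set x1 := c *: p (q u); set x2 := c *: q (p u); ring.
rewrite (isDiff1_mul hq a b) (isDiff1_mul hp a b) !(Klinear_add lp) !(Klinear_add lq).
rewrite !(isDiff1_mul hp) !(isDiff1_mul hq) /der_part !(Klinear_add lp) !(Klinear_add lq).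
rewrite !(KlinearN lp) !(KlinearN lq) !(isDiff1_mul hp) !(isDiff1_mul hq) /der_part; ring.
Qed.

Lemma isDer_mull (a : A) (X : F) : isDer X -> isDer (fun b => a * X b).
Proof.
case=> hl h; split=> [k x y|x y]; first by rewrite hl mulrDr scalerAr.
by rewrite h; ring.
Qed.

Lemma isDer_commop (X Y : F) : isDer X -> isDer Y -> isDer (commop X Y).
Proof.
move=> hX hY; have dc := isDiff1_commop (isDer_Diff1 hX) (isDer_Diff1 hY).
split; first exact: isDiff1_Klinear.
move=> a b; rewrite (isDiff1_mul dc) /der_part /commop !isDer_1 //.
by rewrite (Klinear0 hX.1) (Klinear0 hY.1); ring.
Qed.

Lemma isMult_commop_mulopl c (q : F) : D q -> isMult (commop (mulop c) q).
Proof.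
move=> hq; exists (- der_part q c); apply: functional_extensionality => b.
by rewrite /commop /mulop (isDiff1_mul hq); ring.
Qed.

Lemma isMult_commop_mulopr c (q : F) : D q -> isMult (commop q (mulop c)).
Proof.
move=> hq; exists (der_part q c); apply: functional_extensionality => b.
by rewrite /commop /mulop (isDiff1_mul hq); ring.
Qed.

Lemma mulop0 : mulop 0 = (fun _ : A => 0).
Proof. by apply: functional_extensionality => b; rewrite /mulop mul0r. Qed.

Lemma der_part_mulop c a : der_part (mulop c) a = 0.
Proof. by rewrite /der_part /mulop mulr1 mulrC subrr. Qed.

Lemma der_part0 (q : F) : D q -> der_part q 0 = 0.
Proof. by move=> hq; rewrite /der_part (Klinear0 (isDiff1_Klinear hq)) mul0r subrr. Qed.

Lemma der_part_lcomb c x y a : der_part (lcomb c x y) a = c *: der_part x a + der_part y a.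
Proof. by rewrite /der_part /lcomb mulrDr -scalerAr scalerBr opprD addrACA. Qed.

Lemma der_part_Klinear (p : F) c a b : Klinear p ->
  der_part p (c *: a + b) = c *: der_part p a + der_part p b.
Proof. by move=> hp; rewrite /der_part hp mulrDl -scalerAl scalerBr opprD addrACA. Qed.

Lemma der_part_Der_mul (X : F) a b : isDer X -> der_part X (a * b) = a * der_part X b + X a * b.
Proof. by move=> hX; rewrite !der_part_Der //; case: hX => _ ->. Qed.

Lemma commop_lcombl (q : F) c x y : Klinear q -> commop (lcomb c x y) q = lcomb c (commop x q) (commop y q).
Proof.
move=> hq; apply: functional_extensionality => b.
by rewrite /commop /lcomb hq scalerBr opprD addrACA.
Qed.

Lemma commop_lcombr (p : F) c x y : Klinear p -> commop p (lcomb c x y) = lcomb c (commop p x) (commop p y).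
Proof.
move=> hp; apply: functional_extensionality => b.
by rewrite /commop /lcomb hp scalerBr opprD addrACA.
Qed.

Lemma commop_mull (Y X : F) a : isDer X ->
  commop (fun b => a * Y b) X = lcomb 1 (fun b => a * commop Y X b) (fun b => - X a * Y b).
Proof.
case=> _ hX; apply: functional_extensionality => b.
by rewrite /commop /lcomb scale1r hX; ring.
Qed.
End Diff1.

Section Tuples.
Variable T : Type.
Implicit Types (U : nat -> T) (v w : T).

Definition upd U (p : nat) v : nat -> T := fun m => if m == p then v else U m.

Definition tswap U (p q : nat) : nat -> T :=
  fun m => if m == p then U q else if m == q then U p else U m.

Lemma upd_id U p : upd U p (U p) = U.
Proof. by apply: functional_extensionality => m; rewrite /upd; case: eqP => // ->. Qed.

Lemma updC U p q v w : p != q -> upd (upd U p v) q w = upd (upd U q w) p v.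
Proof.
move=> npq; apply: functional_extensionality => m; rewrite /upd.
case: (eqVneq m q) => [->|_]; first by rewrite [q == p]eq_sym (negbTE npq) ?eqxx.
by case: (m == p).
Qed.

Lemma upd_upd U p v w : upd (upd U p v) p w = upd U p w.
Proof. by apply: functional_extensionality => m; rewrite /upd; case: eqP. Qed.
End Tuples.

Section Diff1Tuples.
Variables (K : fieldType) (A : comAlgType K).
Local Notation F := (A -> A).
Local Notation D := (@isDiff1 K A).

(* Argument tuples are indexed by [nat], so that deleting or inserting
   arguments does not change the index type. *)
Definition Diff1_upto (r : nat) (U : nat -> F) := forall m, (m < r)%N -> D (U m).

Definition multilinear_upto (r : nat) (G : (nat -> F) -> A) :=
  forall U p c x y, Diff1_upto r U -> (p < r)%N -> D x -> D y ->
    G (upd U p (lcomb c x y)) = c *: G (upd U p x) + G (upd U p y).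

Lemma Diff1_upto_upd r U p v : Diff1_upto r U -> D v -> Diff1_upto r (upd U p v).
Proof. by move=> hU hv m hm; rewrite /upd; case: eqP => // _; apply: hU. Qed.

Lemma Diff1_upto_tswap r U p q : Diff1_upto r U -> (p < r)%N -> (q < r)%N ->
  Diff1_upto r (tswap U p q).
Proof.
by move=> hU hp hq m hm; rewrite /tswap; case: eqP => _; [apply: hU|case: eqP => _; apply: hU].
Qed.

Section Alternating.
Variables (r : nat) (G : (nat -> F) -> A).
Hypothesis G_lin : multilinear_upto r G.

(* Polarization: expand [G] with [x + y] in both slots [p] and [q]. *)
Lemma alternating_tswap p q : (p < r)%N -> (q < r)%N -> p != q ->
  (forall V, Diff1_upto r V -> V p = V q -> G V = 0) ->
  forall U, Diff1_upto r U -> G (tswap U p q) = - G U.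
Proof.
move=> hp hq npq hz U hU.
set x := U p; set y := U q.
have Dx : D x by apply: hU.
have Dy : D y by apply: hU.
have Ds : D (lcomb 1 x y) by apply: isDiff1_lcomb.
have h0 : G (upd (upd U p (lcomb 1 x y)) q (lcomb 1 x y)) = 0.
  by apply: hz; [apply: Diff1_upto_upd => //; apply: Diff1_upto_upd|rewrite /upd !eqxx; case: ifP].
move: h0; rewrite G_lin ?scale1r //; last exact: Diff1_upto_upd.
rewrite !(updC _ _ _ npq) !G_lin ?scale1r //; try by apply: Diff1_upto_upd.
rewrite (hz (upd (upd U q x) p x)) ?add0r; first last.
- by rewrite /upd !eqxx; case: ifP.
- by apply: Diff1_upto_upd => //; apply: Diff1_upto_upd.
rewrite (hz (upd (upd U q y) p y)) ?addr0; first last.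
- by rewrite /upd !eqxx; case: ifP.
- by apply: Diff1_upto_upd => //; apply: Diff1_upto_upd.
have -> : upd (upd U q x) p y = tswap U p q.
  apply: functional_extensionality => m; rewrite /upd /tswap.
  by case: eqP => // ->; rewrite (negbTE npq).
rewrite /x /y !upd_id.
by move/eqP; rewrite addr_eq0 => /eqP.
Qed.

(* Alternation follows from vanishing on adjacent equal arguments: move the
   second copy leftwards by transpositions, each of which only changes the sign. *)
Lemma alternating_of_adjacent :
  (forall V p, Diff1_upto r V -> (p.+1 < r)%N -> V p = V p.+1 -> G V = 0) ->
  forall V p q, Diff1_upto r V -> (p < q)%N -> (q < r)%N -> V p = V q -> G V = 0.
Proof.
move=> hadj.
suff H : forall d V p q, q = (p + d.+1)%N -> Diff1_upto r V -> (q < r)%N -> V p = V q -> G V = 0.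
  by move=> V p q hV hpq hq e; apply: (H (q - p).-1 V p q) => //; lia.
elim=> [|d IH] V p q -> hV hq e; first by apply: (hadj V p) => //; rewrite addn1 in e hq.
have hs : G (tswap V (p + d.+1) (p + d.+2)) = - G V.
  apply: alternating_tswap => //; try lia.
  by move=> V' hV' eV'; apply: (hadj V' (p + d.+1)%N) => //; [lia|rewrite eV' addnS].
have : G (tswap V (p + d.+1) (p + d.+2)) = 0.
  apply: (IH _ p (p + d.+1)%N) => //; first (by apply: Diff1_upto_tswap => //; lia); first lia.
  rewrite /tswap /=; have -> : (p == p + d.+1)%N = false by apply/eqP; lia.
  have -> : (p == p + d.+2)%N = false by apply/eqP; lia.
  by rewrite eqxx.
by rewrite hs => /eqP; rewrite oppr_eq0 => /eqP.
Qed.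
End Alternating.
End Diff1Tuples.

Section OmegaValues.
Variables (K : fieldType) (A : comAlgType K).
Local Notation F := (A -> A).
Local Notation D := (@isDiff1 K A).
Variables (n : nat) (om : Lmap A n).
Hypothesis hom : inOmega om.

Definition omval (U : nat -> F) : A := om (fun l : 'I_n => U l) 1.

Lemma om_mulop U : Diff1_upto n U -> om (fun l : 'I_n => U l) = mulop (omval U).
Proof.
move=> hU; have [_ [hv _]] := hom; case: (hv _ (fun i => hU _ (ltn_ord i))) => c hc.
by rewrite /omval hc /mulop mulr1.
Qed.

Lemma eq_omval U V : (forall m, (m < n)%N -> U m = V m) -> omval U = omval V.
Proof.
move=> h; rewrite /omval; congr (om _ _); apply: functional_extensionality => l.
exact: h (ltn_ord l).
Qed.

Lemma omval_multilinear : multilinear_upto n omval.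
Proof.
move=> U p c x y hU hp Dx Dy; have [[_ [hml _]] _] := hom.
have e := hml (fun l : 'I_n => U l) (Ordinal hp) x y c (fun i => hU _ (ltn_ord i)) Dx Dy.
rewrite /omval /upd /lcomb.
have upd_ord v : (fun l : 'I_n => if val l == p then v else U l) =
                 (fun l => if l == Ordinal hp then v else U l) by [].
by rewrite !upd_ord e.
Qed.

Lemma omval_alt U p q : Diff1_upto n U -> (p < n)%N -> (q < n)%N -> p != q ->
  U p = U q -> omval U = 0.
Proof.
move=> hU hp hq npq e; have [[_ [_ hal]] _] := hom.
have := hal (fun l : 'I_n => U l) (Ordinal hp) (Ordinal hq) (fun i => hU _ (ltn_ord i)).
by rewrite /omval => -> //; rewrite -val_eqE.
Qed.

Lemma omval_isMult U p : Diff1_upto n U -> (p < n)%N -> isMult (U p) -> omval U = 0.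
Proof.
move=> hU hp hm; have [_ [_ [hz _]]] := hom.
by rewrite /omval (hz _ (fun i => hU _ (ltn_ord i))) //; exists (Ordinal hp).
Qed.

Lemma omval_tswap U p q : Diff1_upto n U -> (p < n)%N -> (q < n)%N -> p != q ->
  omval (tswap U p q) = - omval U.
Proof.
move=> hU hp hq npq; apply: (alternating_tswap omval_multilinear) => //.
by move=> V hV; apply: omval_alt.
Qed.

Lemma omval_mull0 U a : (forall m, (m < n)%N -> isDer (U m)) -> (0 < n)%N ->
  omval (upd U 0 (fun b => a * U 0%N b)) = a * omval U.
Proof.
move=> hU hn; have [_ [_ [_ hA]]] := hom.
have e := hA (fun l : 'I_n => U l) a (fun i => hU _ (ltn_ord i)) (Ordinal hn) erefl.
rewrite /omval -[RHS]/((fun b => a * om (fun l : 'I_n => U l) b) 1) -e.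
congr (om _ _); apply: functional_extensionality => j.
by rewrite /upd -val_eqE /=; case: eqP => // ->.
Qed.

(* A-linearity in an arbitrary argument, by swapping it to the front. *)
Lemma omval_mull U p a : (forall m, (m < n)%N -> isDer (U m)) -> (p < n)%N ->
  omval (upd U p (fun b => a * U p b)) = a * omval U.
Proof.
move=> hU hp; case: (eqVneq p 0%N) => [->|np0]; first by apply: omval_mull0 => //; lia.
have hDU : Diff1_upto n U by move=> m hm; apply/isDer_Diff1/hU.
have hn : (0 < n)%N by lia.
have n0p : (0 != p)%N by rewrite eq_sym.
rewrite -[LHS]opprK -(@omval_tswap _ 0 p) //; last first.
  by apply: Diff1_upto_upd => //; apply/isDer_Diff1/isDer_mull/hU.
have -> : tswap (upd U p (fun b => a * U p b)) 0 p =
          upd (tswap U 0 p) 0 (fun b => a * tswap U 0 p 0%N b).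
  apply: functional_extensionality => m; rewrite /tswap /upd /= eqxx (negbTE n0p).
  by case: (eqVneq m 0%N) => // _; case: (m == p).
rewrite omval_mull0 ?omval_tswap ?mulrN ?opprK //.
by move=> m hm; rewrite /tswap; case: eqP => _; [apply: hU|case: eqP => _; apply: hU].
Qed.
End OmegaValues.

Lemma sum_ord_supp2 (R : nmodType) N (g : nat -> R) p q : (p < N)%N -> (q < N)%N -> p != q ->
  (forall k, (k < N)%N -> k != p -> k != q -> g k = 0) ->
  \sum_(k < N) g k = g p + g q.
Proof.
move=> hp hq npq hz.
rewrite (bigD1 (Ordinal hp)) //= (bigD1 (Ordinal hq)) /=; last by rewrite -val_eqE /= eq_sym.
by rewrite big1 ?addr0 // => k /andP[h1 h2]; apply: hz.
Qed.

Lemma sum_ord_gt0 (R : nmodType) N (g : nat -> R) :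
  \sum_(j < N.+1 | (0 < j)%N) g j = \sum_(j < N) g j.+1.
Proof. by rewrite big_mkcond big_ord_recl /= add0r. Qed.

Lemma signr_addS (R : pzRingType) k (x : R) : (-1) ^+ k * x + (-1) ^+ k.+1 * x = 0.
Proof. by rewrite exprS mulN1r mulNr addrN. Qed.

Section Koszul.
Variables (K : fieldType) (A : comAlgType K).
Local Notation F := (A -> A).
Local Notation D := (@isDiff1 K A).
Variables (n : nat) (om : Lmap A n).
Hypothesis hom : inOmega om.
Local Notation omval := (omval om).
Local Notation Diff1_upto := (@Diff1_upto K A).
Local Notation multilinear_upto := (@multilinear_upto K A).
Implicit Types U : nat -> F.

(* [commop (U i) (U j)] followed by the [U k], [k <> i, j], in order. *)
Definition commtuple (U : nat -> F) (i j : nat) : nat -> F :=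
  fun l => if l == 0%N then commop (U i) (U j) else U (bump i (bump j.-1 l.-1)).

Definition commtuple_pos (i j p : nat) := (unbump j.-1 (unbump i p)).+1.

(* The Koszul formula for [d om], with a derivation [X] acting on the
   values of [om] replaced by [der_part X], so that it makes sense for
   arguments in Diff^1(A). *)
Definition koszul_der (U : nat -> F) : A :=
  \sum_(k < n.+1) (-1) ^+ k * der_part (U k) (omval (U \o bump k)).

Definition koszul_comm (U : nat -> F) : A :=
  \sum_(i < n.+1) \sum_(j < n.+1 | (i < j)%N) (-1) ^+ (i + j) * omval (commtuple U i j).

Definition koszul (U : nat -> F) : A := koszul_der U + koszul_comm U.

Lemma Diff1_upto_bump U k : Diff1_upto n.+1 U -> (k < n.+1)%N -> Diff1_upto n (U \o bump k).
Proof. by move=> hU hk m hm /=; apply: hU; rewrite /bump; lia. Qed.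

Lemma Diff1_upto_commtuple U i j : Diff1_upto n.+1 U -> (i < j)%N -> (j < n.+1)%N ->
  Diff1_upto n (commtuple U i j).
Proof.
move=> hU hij hj m hm; rewrite /commtuple; case: eqP => hm0.
  by apply: isDiff1_commop; apply: hU; lia.
by apply: hU; rewrite /bump; lia.
Qed.

Lemma isDer_commtuple U i j : (forall m, (m < n.+1)%N -> isDer (U m)) -> (i < j)%N ->
  (j < n.+1)%N -> forall m, (m < n)%N -> isDer (commtuple U i j m).
Proof.
move=> hD hij hj m hm; rewrite /commtuple; case: eqP => hm0.
  by apply: isDer_commop; apply: hD; lia.
by apply: hD; rewrite /bump; lia.
Qed.

Lemma commtuple_pos_lt i j p : (i < j)%N -> (j < n.+1)%N -> (p < n.+1)%N -> i != p -> j != p ->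
  (commtuple_pos i j p < n)%N.
Proof. by move=> hij hj hp /eqP nip /eqP njp; rewrite /commtuple_pos /unbump; lia. Qed.

Lemma commtuple_posE U i j p : (i < j)%N -> i != p -> j != p ->
  commtuple U i j (commtuple_pos i j p) = U p.
Proof.
move=> hij /eqP nip /eqP njp; rewrite /commtuple /commtuple_pos /=.
by congr (U _); rewrite /bump /unbump; lia.
Qed.

Lemma commtuple_upd_fst U p v j : (p < j)%N ->
  commtuple (upd U p v) p j = upd (commtuple U p j) 0 (commop v (U j)).
Proof.
move=> hpj; apply: functional_extensionality => l; rewrite /commtuple /upd eqxx.
have -> : (j == p) = false by apply/eqP; lia.
case: (eqVneq l 0%N) => // nl.
by have -> : (bump p (bump j.-1 l.-1) == p) = false by apply/eqP; rewrite /bump; lia.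
Qed.

Lemma commtuple_upd_snd U p v i : (i < p)%N ->
  commtuple (upd U p v) i p = upd (commtuple U i p) 0 (commop (U i) v).
Proof.
move=> hip; apply: functional_extensionality => l; rewrite /commtuple /upd eqxx.
have -> : (i == p) = false by apply/eqP; lia.
case: (eqVneq l 0%N) => // nl.
by have -> : (bump i (bump p.-1 l.-1) == p) = false by apply/eqP; rewrite /bump; lia.
Qed.

Lemma commtuple_upd_other U p v i j : i != p -> j != p -> (i < j)%N ->
  commtuple (upd U p v) i j = upd (commtuple U i j) (commtuple_pos i j p) v.
Proof.
move=> nip njp hij; apply: functional_extensionality => l; rewrite /commtuple /upd.
rewrite (negbTE nip) (negbTE njp); case: (eqVneq l 0%N) => [->|nl] //.
move/eqP: nip => nip; move/eqP: njp => njp; move/eqP: nl => nl.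
by congr (if _ then _ else _); apply/eqP/eqP; rewrite /commtuple_pos /bump /unbump; lia.
Qed.

Lemma upd_bump_eq U p v : upd U p v \o bump p = U \o bump p.
Proof.
apply: functional_extensionality => l; rewrite /upd /=.
by have -> : (bump p l == p) = false by apply/eqP; rewrite /bump; lia.
Qed.

Lemma upd_bump_neq U p v k : k != p -> upd U p v \o bump k = upd (U \o bump k) (unbump k p) v.
Proof.
move=> /eqP nkp; apply: functional_extensionality => l; rewrite /upd /=.
by congr (if _ then _ else _); apply/eqP/eqP; rewrite /bump /unbump; lia.
Qed.

Lemma koszul_der_multilinear : multilinear_upto n.+1 koszul_der.
Proof.
move=> U p c x y hU hp Dx Dy.
rewrite /koszul_der scaler_sumr -big_split; apply: eq_bigr => k _ /=.
case: (eqVneq (k : nat) p) => [->|nkp].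
  by rewrite !upd_bump_eq /upd eqxx der_part_lcomb mulrDr scalerAr.
have hk : (unbump k p < n)%N by move/eqP: nkp => nkp; have := ltn_ord k; rewrite /unbump; lia.
rewrite !(upd_bump_neq _ _ nkp) omval_multilinear //; last exact: Diff1_upto_bump.
rewrite /upd (negbTE nkp) der_part_Klinear; last by case: (hU k (ltn_ord k)).
by rewrite mulrDr scalerAr.
Qed.

Lemma koszul_comm_multilinear : multilinear_upto n.+1 koszul_comm.
Proof.
move=> U p c x y hU hp Dx Dy.
rewrite /koszul_comm scaler_sumr -big_split; apply: eq_bigr => i _.
rewrite scaler_sumr -big_split; apply: eq_bigr => j hij /=.
rewrite scalerAr -mulrDr; congr (_ * _).
have hj := ltn_ord j; have Di : D (U i) by apply: hU; lia.
have Dj : D (U j) by apply: hU.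
have hUij := Diff1_upto_commtuple hU hij hj.
case: (eqVneq (i : nat) p) => [<-|nip].
  rewrite !commtuple_upd_fst // commop_lcombl ?omval_multilinear //; try lia.
  - exact: isDiff1_commop.
  - exact: isDiff1_commop.
  - exact: isDiff1_Klinear.
case: (eqVneq (j : nat) p) => [<-|njp].
  rewrite !commtuple_upd_snd // commop_lcombr ?omval_multilinear //; try lia.
  - exact: isDiff1_commop.
  - exact: isDiff1_commop.
  - exact: isDiff1_Klinear.
by rewrite !commtuple_upd_other // omval_multilinear // commtuple_pos_lt.
Qed.

Lemma koszul_multilinear : multilinear_upto n.+1 koszul.
Proof.
move=> U p c x y hU hp Dx Dy.
by rewrite /koszul koszul_der_multilinear // koszul_comm_multilinear // scalerDr addrACA.
Qed.

Lemma bump_unbump k p : k != p -> bump k (unbump k p) = p.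
Proof. by move/eqP=> h; rewrite /bump /unbump; lia. Qed.

Lemma koszul_der_isMult U p : Diff1_upto n.+1 U -> (p < n.+1)%N -> isMult (U p) -> koszul_der U = 0.
Proof.
move=> hU hp hm; rewrite /koszul_der big1 // => k _.
case: (eqVneq (k : nat) p) => [->|nkp]; first by case: hm => c ->; rewrite der_part_mulop mulr0.
rewrite (@omval_isMult _ _ _ _ hom _ (unbump k p)) ?der_part0 ?mulr0 //.
- by apply: hU.
- exact: Diff1_upto_bump.
- by move/eqP: nkp => nkp; have := ltn_ord k; rewrite /unbump; lia.
- by rewrite /= bump_unbump.
Qed.

Lemma koszul_comm_isMult U p : Diff1_upto n.+1 U -> (p < n.+1)%N -> isMult (U p) -> koszul_comm U = 0.
Proof.
move=> hU hp hm; rewrite /koszul_comm big1 // => i _; rewrite big1 // => j hij.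
have hj := ltn_ord j; have Dj : D (U j) by apply: hU.
have Di : D (U i) by apply: hU; lia.
have hUij := Diff1_upto_commtuple hU hij hj.
case: (eqVneq (i : nat) p) => [eip|nip].
  rewrite (@omval_isMult _ _ _ _ hom _ 0) ?mulr0 //; first lia.
  by rewrite /commtuple /= eip; case: hm => c ->; apply: isMult_commop_mulopl.
case: (eqVneq (j : nat) p) => [ejp|njp].
  rewrite (@omval_isMult _ _ _ _ hom _ 0) ?mulr0 //; first lia.
  by rewrite /commtuple /= ejp; case: hm => c ->; apply: isMult_commop_mulopr.
rewrite (@omval_isMult _ _ _ _ hom _ (commtuple_pos i j p)) ?mulr0 ?commtuple_posE //.
exact: commtuple_pos_lt.
Qed.

Lemma koszul_isMult U p : Diff1_upto n.+1 U -> (p < n.+1)%N -> isMult (U p) -> koszul U = 0.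
Proof.
by move=> hU hp hm; rewrite /koszul (koszul_der_isMult hU hp hm) (koszul_comm_isMult hU hp hm) addr0.
Qed.

Lemma bump_adj U p m : U p = U p.+1 -> U (bump p m) = U (bump p.+1 m).
Proof.
move=> e; case: (eqVneq m p) => [->|/eqP nmp].
  have -> : bump p p = p.+1 by rewrite /bump; lia.
  by have -> : bump p.+1 p = p by rewrite /bump; lia.
by have -> : bump p m = bump p.+1 m by rewrite /bump; lia.
Qed.

(* Adjacent equal arguments [U p = U p.+1]: the terms of [koszul] cancel in pairs,
   except those with both copies among the remaining arguments of [om]. *)
Lemma koszul_der_adj U p : Diff1_upto n.+1 U -> (p.+1 < n.+1)%N -> U p = U p.+1 ->
  koszul_der U = 0.
Proof.
move=> hU hp e; rewrite /koszul_der.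
rewrite (@sum_ord_supp2 _ n.+1 (fun k => (-1) ^+ k * der_part (U k) (omval (U \o bump k))) p p.+1) //;
  first last.
- move=> k hk /eqP nkp /eqP nkp1.
  rewrite (@omval_alt _ _ _ _ hom _ (unbump k p) (unbump k p.+1)) ?der_part0 ?mulr0 //.
  + by apply: hU.
  + exact: Diff1_upto_bump.
  + by rewrite /unbump; lia.
  + by rewrite /unbump; lia.
  + by apply/eqP; rewrite /unbump; lia.
  + by rewrite /= !bump_unbump //; apply/eqP; lia.
- by rewrite neq_ltn ltnSn.
- lia.
rewrite /= (@eq_omval _ _ _ _ (U \o bump p) (U \o bump p.+1)); last by move=> m _ /=; apply: bump_adj.
by rewrite -e signr_addS.
Qed.

Lemma commtuple_adj_eq0 U i j p : Diff1_upto n.+1 U -> U p = U p.+1 -> (p.+1 < n.+1)%N ->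
  (i < j)%N -> (j < n.+1)%N -> i != p -> i != p.+1 -> j != p -> j != p.+1 ->
  omval (commtuple U i j) = 0.
Proof.
move=> hU e hp hij hj nip nip1 njp njp1.
apply: (@omval_alt _ _ _ _ hom _ (commtuple_pos i j p) (commtuple_pos i j p.+1)).
- exact: Diff1_upto_commtuple.
- by apply: commtuple_pos_lt => //; lia.
- by apply: commtuple_pos_lt => //; lia.
- move: nip nip1 njp njp1 => /eqP ? /eqP ? /eqP ? /eqP ?.
  by apply/eqP; rewrite /commtuple_pos /unbump; lia.
- by rewrite !commtuple_posE.
Qed.

Lemma commtuple_adj_snd U i p : U p = U p.+1 -> (i < p)%N ->
  omval (commtuple U i p) = omval (commtuple U i p.+1).
Proof.
move=> e hip; apply: eq_omval => m hm; rewrite /commtuple.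
case: eqP => [_|/eqP nm0]; first by rewrite e.
case: (eqVneq m.-1 p.-1) => [em|/eqP nem].
  have -> : bump i (bump p.-1 m.-1) = p.+1 by rewrite /bump; lia.
  by have -> : bump i (bump p.+1.-1 m.-1) = p by rewrite /bump; lia.
by have -> : bump i (bump p.-1 m.-1) = bump i (bump p.+1.-1 m.-1) by rewrite /bump; lia.
Qed.

Lemma commtuple_adj_fst U p j : U p = U p.+1 -> omval (commtuple U p j) = omval (commtuple U p.+1 j).
Proof.
move=> e; apply: eq_omval => m hm; rewrite /commtuple.
by case: eqP => [_|_]; [rewrite e|apply: bump_adj].
Qed.

Lemma koszul_comm_row_adj U p i : Diff1_upto n.+1 U -> (p.+1 < n.+1)%N -> U p = U p.+1 ->
  (i < n.+1)%N -> i != p -> i != p.+1 ->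
  \sum_(j < n.+1 | (i < j)%N) (-1) ^+ (i + j) * omval (commtuple U i j) = 0.
Proof.
move=> hU hp e hi /eqP nip /eqP nip1.
have [hip|hpi] := ltnP i p; last first.
  by rewrite big1 // => j hij; rewrite (@commtuple_adj_eq0 U i j p) ?mulr0 //; apply/eqP; lia.
rewrite big_mkcond (@sum_ord_supp2 _ n.+1
  (fun j => if (i < j)%N then (-1) ^+ (i + j) * omval (commtuple U i j) else 0) p p.+1) //;
  first last.
- move=> j hj njp njp1 /=; case: ifP => // hij.
  by rewrite (@commtuple_adj_eq0 U i j p) ?mulr0 //; apply/eqP => //; lia.
- by rewrite neq_ltn ltnSn.
- lia.
by rewrite /= hip ltnW // (commtuple_adj_snd e hip) addnS signr_addS.
Qed.

Lemma koszul_comm_adj U p : Diff1_upto n.+1 U -> (p.+1 < n.+1)%N -> U p = U p.+1 ->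
  koszul_comm U = 0.
Proof.
move=> hU hp e; rewrite /koszul_comm.
rewrite (@sum_ord_supp2 _ n.+1
  (fun i => \sum_(j < n.+1 | (i < j)%N) (-1) ^+ (i + j) * omval (commtuple U i j)) p p.+1) //;
  first last.
- by move=> i hi nip nip1; apply: (koszul_comm_row_adj hU hp e).
- by rewrite neq_ltn ltnSn.
- lia.
rewrite /= [X in X + _]big_mkcond [X in _ + X]big_mkcond -big_split big1 // => j _ /=.
case: (ltngtP j p.+1) => hj.
- by rewrite addr0.
- by rewrite (commtuple_adj_fst _ e) addSn signr_addS.
- rewrite addr0 (@omval_isMult _ _ _ _ hom _ 0) ?mulr0 //; first last.
  + rewrite /commtuple /= hj -e; exists 0; apply: functional_extensionality => b.
    by rewrite /commop /mulop subrr mul0r.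
  + lia.
  + by apply: Diff1_upto_commtuple; rewrite ?hj ?ltnSn.
Qed.

Lemma koszul_alt U p q : Diff1_upto n.+1 U -> (p < q)%N -> (q < n.+1)%N -> U p = U q ->
  koszul U = 0.
Proof.
apply: (alternating_of_adjacent koszul_multilinear) => V r hV hr e.
by rewrite /koszul (koszul_der_adj hV hr e) (koszul_comm_adj hV hr e) addr0.
Qed.

Section FirstArgument.
Variables (U : nat -> F) (a : A).
Hypothesis U_der : forall m, (m < n.+1)%N -> isDer (U m).
Let aU := upd U 0 (fun b => a * U 0%N b).

(* Multiplying the first argument by [a] produces the extra terms
   [(-1)^k X_k(a) om(X_0, .., X_k^, ..)] in [koszul_der] (Leibniz rule), and
   their opposites in [koszul_comm] through [[a X_0, X_k] = a [X_0, X_k] - X_k(a) X_0]. *)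
Definition mull_defect : A :=
  \sum_(k < n) (-1) ^+ k.+1 * (U k.+1 a * omval (U \o bump k.+1)).

Lemma koszul_der_mull : koszul_der aU = a * koszul_der U + mull_defect.
Proof.
rewrite /koszul_der [LHS]big_ord_recl
  (big_ord_recl n (fun k : 'I_n.+1 => (-1) ^+ k * der_part (U k) (omval (U \o bump k)))).
rewrite [in RHS]mulrDr -addrA; congr (_ + _).
  rewrite /aU upd_bump_eq /= /upd /= der_part_Der; last by apply/isDer_mull/U_der.
  by rewrite der_part_Der; [rewrite mulrCA|apply: U_der].
rewrite mulr_sumr -big_split; apply: eq_bigr => i _ /=.
rewrite /aU (@upd_bump_neq U 0 _ i.+1) //= /upd /=.
have -> : unbump i.+1 0 = 0%N by [].
have -> : (fun b => a * U 0%N b) = (fun b => a * (U \o bump i.+1) 0%N b) by [].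
rewrite omval_mull0 //; first last.
- by case: (i) => [i' hi'] /=; lia.
- by move=> m hm /=; apply: U_der; rewrite /bump; lia.
rewrite der_part_Der_mul; last by apply: U_der; have := ltn_ord i; rewrite /bump; lia.
by rewrite mulrDr mulrCA.
Qed.

Lemma omval_commtuple_mull0 j : (0 < j < n.+1)%N ->
  omval (commtuple aU 0 j) = a * omval (commtuple U 0 j) - U j a * omval (U \o bump j).
Proof.
case/andP=> hj0 hj; have DU0 := U_der (ltn0Sn n); have DUj := U_der hj.
have hn0 : (0 < n)%N by lia.
have hUj : Diff1_upto n (commtuple U 0 j).
  by apply: Diff1_upto_commtuple => // m hm; apply/isDer_Diff1/U_der.
have Uj_der := isDer_commtuple U_der hj0 hj.
rewrite /aU commtuple_upd_fst // (commop_mull _ _ DUj) omval_multilinear //; first last.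
- by apply/isDer_Diff1/isDer_mull.
- by apply/isDer_Diff1/isDer_mull/isDer_commop.
rewrite omval_mull0 // -(upd_upd (commtuple U 0 j) 0 (U 0%N)) omval_mull0 //; first last.
  by move=> m hm; rewrite /upd; case: eqP => // _; apply: Uj_der.
rewrite (@eq_omval _ _ _ _ (upd (commtuple U 0 j) 0 (U 0%N)) (U \o bump j)); last first.
  move=> m hm; rewrite /upd /commtuple /=; case: (eqVneq m 0%N) => [->|hm0];
    by congr (U _); rewrite /bump; lia.
by rewrite scale1r; ring.
Qed.

Lemma koszul_comm_mull : koszul_comm aU = a * koszul_comm U - mull_defect.
Proof.
rewrite /koszul_comm [LHS]big_ord_recl (big_ord_recl n (fun i : 'I_n.+1 =>
  \sum_(j < n.+1 | (i < j)%N) (-1) ^+ (i + j) * omval (commtuple U i j))).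
rewrite [in RHS]mulrDr addrAC; congr (_ + _).
  rewrite /= (@sum_ord_gt0 _ n (fun j => (-1) ^+ (0 + j) * omval (commtuple aU 0 j))).
  rewrite (@sum_ord_gt0 _ n (fun j => (-1) ^+ (0 + j) * omval (commtuple U 0 j))).
  rewrite mulr_sumr -sumrB; apply: eq_bigr => j _.
  by rewrite omval_commtuple_mull0 ?add0n; [ring|have := ltn_ord j; lia].
rewrite mulr_sumr; apply: eq_bigr => i _; rewrite mulr_sumr; apply: eq_bigr => j hij /=.
have hj := ltn_ord j; have ni0 : (i.+1 != 0)%N by [].
have nj0 : (j != 0 :> nat)%N by apply/eqP; lia.
rewrite /aU commtuple_upd_other //.
have -> : (fun b => a * U 0%N b) = (fun b => a * commtuple U i.+1 j (commtuple_pos i.+1 j 0) b).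
  by rewrite commtuple_posE.
rewrite (omval_mull hom); first by rewrite mulrCA.
- by apply: isDer_commtuple.
- by apply: commtuple_pos_lt.
Qed.
End FirstArgument.

Lemma koszul_mull U a : (forall m, (m < n.+1)%N -> isDer (U m)) ->
  koszul (upd U 0 (fun b => a * U 0%N b)) = a * koszul U.
Proof.
move=> hD; rewrite /koszul koszul_der_mull // koszul_comm_mull //.
by rewrite mulrDr addrACA subrr addr0.
Qed.
End Koszul.

Lemma sign_shuffle1 (R : pzRingType) n k :
  (-1) ^+ ((2 + 1) * n) * (-1) ^+ (odd n (+) odd k) = (-1) ^+ k :> R.
Proof.
rewrite signr_addb !signr_odd mulrA -exprD.
have -> : ((2 + 1) * n + n = (2 * n).*2)%N by lia.
by rewrite -mul2n mulnC exprM sqrr_sign mul1r.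
Qed.

Lemma sign_shuffle2 (R : pzRingType) (i j : nat) : (0 < j)%N ->
  (-1) ^+ (odd i (+) odd j.-1) = - (-1) ^+ (i + j) :> R.
Proof.
move=> hj; rewrite signr_addb !signr_odd -exprD.
by rewrite (_ : (i + j = (i + j.-1).+1)%N) ?exprS ?mulN1r ?opprK //; lia.
Qed.

Section Bracket.
Variables (K : fieldType) (A : comAlgType K).
Local Notation F := (A -> A).
Local Notation D := (@isDiff1 K A).
Local Notation mu := (@mu K A).

Lemma ext_val p (u : 'I_p -> F) (i : 'I_p) : ext u i = u i.
Proof. by rewrite /ext valK. Qed.

Lemma ext_lt p (u : 'I_p -> F) m (hm : (m < p)%N) : ext u m = u (Ordinal hm).
Proof. by rewrite /ext insubT. Qed.

Lemma ext_ge p (u : 'I_p -> F) m : (p <= m)%N -> ext u m = (fun _ => 0).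
Proof. by move=> hm; rewrite /ext insubF // ltnNge hm. Qed.

Lemma ext_perm p (u : 'I_p -> F) (s : 'S_p) m (hm : (m < p)%N) :
  ext (u \o s) m = ext u (s (Ordinal hm)).
Proof. by rewrite ext_lt ext_val. Qed.

Lemma ext_inord n (u : 'I_n.+1 -> F) m : (m < n.+1)%N -> ext u m = u (inord m).
Proof. by move=> hm; rewrite (ext_lt _ hm); congr (u _); apply: val_inj; rewrite /= inordK. Qed.

Lemma ext_cast p q (e : p = q) (u : 'I_q -> F) : ext (fun k : 'I_p => u (cast_ord e k)) = ext u.
Proof.
apply: functional_extensionality => m; case: (ltnP m p) => hm.
  have hm' : (m < q)%N by rewrite -e.
  by rewrite !(ext_lt _ hm) (ext_lt _ hm'); congr (u _); apply: val_inj.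
by rewrite !ext_ge // -e.
Qed.

Lemma ext_upd p (u : 'I_p -> F) (i : 'I_p) v :
  ext (fun j => if j == i then v else u j) = upd (ext u) i v.
Proof.
apply: functional_extensionality => m; rewrite /upd; case: (ltnP m p) => hm.
  by rewrite !(ext_lt _ hm).
rewrite !ext_ge //; have := ltn_ord i; case: eqP => // em; lia.
Qed.

Lemma Diff1_upto_ext p (u : 'I_p -> F) : (forall i, D (u i)) -> Diff1_upto p (ext u).
Proof. by move=> hu m hm; rewrite ext_lt. Qed.

Lemma comp_mu_omega n (om : Lmap A n) (u : 'I_n.+1 -> F) a : inOmega om ->
  (forall i, D (u i)) ->
  (-1) ^+ ((2 + 1) * n) * Defs.comp mu om u a = - (koszul_der om (ext u) * a).
Proof.
move=> hom hu; have hU := Diff1_upto_ext hu.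
rewrite /Defs.comp /= big_shuffle1 mulr_sumr /koszul_der mulr_suml -sumrN.
apply: eq_bigr => k _; rewrite odd_shuffle1 mulrA sign_shuffle1 /mu /=.
have -> : (fun l : 'I_n => ext (u \o shuffle1 k) l) = (fun l : 'I_n => (ext u \o bump k) l).
  apply: functional_extensionality => l.
  have hl : (l < n.+1)%N by have := ltn_ord l; lia.
  by rewrite (ext_perm _ _ hl) /= shuffle1E //; exact: (ltn_ord l).
rewrite (om_mulop hom); last exact: Diff1_upto_bump.
rewrite addn0 (ext_perm _ _ (ltnSn n)) (_ : Ordinal (ltnSn n) = ord_max); last exact: val_inj.
rewrite shuffle1_last ext_val /mulop (isDiff1_mul (hu k)).
by rewrite opprD addrA subrr add0r mulrN mulrA.
Qed.

Lemma ext_shuffle2 N (w : 'I_N.+2 -> F) (i j : 'I_N.+2) m : (i < j)%N -> (m < N.+2)%N ->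
  ext (w \o shuffle2 i j) m = ext w (if m == 0%N then (i : nat) else if m == 1%N then (j : nat)
                                     else bump i (bump j.-1 (m - 2))).
Proof. by move=> hij hm; rewrite (ext_perm _ _ hm) shuffle2E. Qed.

(* The statement is for [M = n.+2] rather than [(n.+1 + 2).-1], the index of
   [comp om mu], which only reduces to it by computation. *)
Lemma comp_omega_mu_gen n (om : Lmap A n.+1) M (w : 'I_M -> F) a : inOmega om -> M = n.+2 ->
  (forall i, D (w i)) ->
  \sum_(s : 'S_M | shuffle 2 s) (-1) ^+ odd_perm s *
     om (fun k : 'I_n.+1 => if val k == 0%N then mu (fun l : 'I_2 => ext (w \o s) l)
                           else ext (w \o s) (2 + k.-1)) a
  = - (koszul_comm om (ext w) * a).
Proof.
move=> hom hM hw; subst M; have hW := Diff1_upto_ext hw.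
rewrite big_shuffle2 /koszul_comm mulr_suml -sumrN; apply: eq_bigr => i _.
rewrite mulr_suml -sumrN; apply: eq_bigr => j hij.
rewrite odd_shuffle2 ?sign_shuffle2 //; try lia.
have -> : (fun k : 'I_n.+1 => if val k == 0%N then mu (fun l : 'I_2 => ext (w \o shuffle2 i j) l)
                             else ext (w \o shuffle2 i j) (2 + k.-1))
          = (fun k : 'I_n.+1 => commtuple (ext w) i j k).
  apply: functional_extensionality => k; rewrite /commtuple /=.
  case: (eqVneq (k : nat) 0%N) => hk0.
    by apply: functional_extensionality => b; rewrite /mu /commop /= !ext_shuffle2.
  have hk := ltn_ord k; rewrite ext_shuffle2 //; last by lia.
  have -> : (2 + k.-1 == 0)%N = false by apply/eqP; lia.
  have -> : (2 + k.-1 == 1)%N = false by apply/eqP; lia.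
  by have -> : (2 + k.-1 - 2 = k.-1)%N by lia.
rewrite (om_mulop hom); last exact: Diff1_upto_commtuple.
by rewrite /mulop mulNr mulrA.
Qed.

Lemma comp_omega_mu n (om : Lmap A n.+1) (w : 'I_((n.+1 + 2).-1) -> F) a : inOmega om ->
  (forall i, D (w i)) -> Defs.comp om mu w a = - (koszul_comm om (ext w) * a).
Proof. by move=> hom hw; rewrite /Defs.comp; apply: comp_omega_mu_gen => //; lia. Qed.

Lemma bracket_mu_Diff1 n (om : Lmap A n) (u : 'I_n.+1 -> F) : inOmega om -> (0 < n)%N ->
  (forall i, D (u i)) -> bracket mu om u = mulop (- koszul om (ext u)).
Proof.
case: n om u => [//|n] om u hom _ hu; apply: functional_extensionality => a.
rewrite /bracket (comp_mu_omega _ hom hu) (comp_omega_mu _ hom) ?ext_cast; last by move=> i.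
rewrite (_ : (-1) ^+ 2 = 1 :> A) ?mul1r; last by rewrite expr2 mulrNN mulr1.
by rewrite /mulop /koszul mulNr mulrDl opprD.
Qed.

Lemma dOmega_koszul n (om : Lmap A n) (X : 'I_n.+1 -> F) : (forall i, isDer (X i)) ->
  dOmega om X = koszul om (ext X).
Proof.
move=> hX; rewrite /dOmega /koszul /koszul_der /koszul_comm; congr (_ + _).
  apply: eq_bigr => k _; rewrite ext_val der_part_Der //; congr (_ * X k _).
  rewrite /omval; congr (om _ _); apply: functional_extensionality => l /=.
  by rewrite ext_inord //; have := ltn_ord l; rewrite /bump; lia.
apply: eq_bigr => i _; apply: eq_bigr => j hij; congr (_ * _).
rewrite /omval; congr (om _ _); apply: functional_extensionality => k /=; rewrite /commtuple /=.
case: eqP => hk0; first by rewrite !ext_val.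
by rewrite ext_inord //; have := ltn_ord k; have := ltn_ord j; rewrite /bump; lia.
Qed.
End Bracket.

Section BracketInOmega.
Variables (K : fieldType) (A : comAlgType K).
Local Notation F := (A -> A).
Local Notation D := (@isDiff1 K A).
Variables (n : nat) (om : Lmap A n).
Hypotheses (hom : inOmega om) (n_gt0 : (0 < n)%N).
Local Notation bmu := (bracket (@mu K A) om).

Lemma bracket_mu_inL : inL (k := n.+1) bmu.
Proof.
have bmuE := bracket_mu_Diff1 hom n_gt0.
split; [|split].
- by move=> u hu; rewrite bmuE //; apply: isDiff1_mulop.
- move=> u i x y c hu Dx Dy.
  have hux : forall j, D (if j == i then x else u j) by move=> j; case: eqP.
  have huy : forall j, D (if j == i then y else u j) by move=> j; case: eqP.
  have hus : forall j, D (if j == i then lcomb c x y else u j).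
    by move=> j; case: eqP => _ //; apply: isDiff1_lcomb.
  rewrite !bmuE // !ext_upd koszul_multilinear //; last exact: Diff1_upto_ext.
  apply: functional_extensionality => b.
  by rewrite /mulop opprD mulrDl -scalerN scalerAl.
- move=> u i j hu nij e; rewrite bmuE //.
  have hU := Diff1_upto_ext hu.
  have e' : ext u i = ext u j by rewrite !ext_val.
  case: (ltngtP i j) => hij.
  + by rewrite (koszul_alt hom hU hij (ltn_ord j) e') oppr0 mulop0.
  + by rewrite (koszul_alt hom hU hij (ltn_ord i) (esym e')) oppr0 mulop0.
  + by move: nij; rewrite (val_inj hij) eqxx.
Qed.

Lemma bracket_mu_inOmega : inOmega (n := n.+1) bmu.
Proof.
have bmuE := bracket_mu_Diff1 hom n_gt0.
split; [exact: bracket_mu_inL|split; [|split]].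
- by move=> u hu; rewrite bmuE //; exists (- koszul om (ext u)).
- move=> u hu [i hi]; rewrite bmuE // (koszul_isMult hom (Diff1_upto_ext hu) (ltn_ord i)).
  + by rewrite oppr0 mulop0.
  + by rewrite ext_val.
- move=> u a hu i0 hi0.
  have hD : forall j, D (u j) by move=> j; apply: isDer_Diff1.
  have hu' : forall j, D (if j == i0 then (fun b => a * u j b) else u j).
    by move=> j; case: eqP => _; [apply/isDer_Diff1/isDer_mull|apply: hD].
  rewrite !bmuE //.
  have -> : (fun j => if j == i0 then (fun b => a * u j b) else u j) =
            (fun j => if j == i0 then (fun b => a * ext u 0%N b) else u j).
    by apply: functional_extensionality => j; case: eqP => // ->; rewrite -hi0 ext_val.
  rewrite ext_upd hi0 koszul_mull //; last by move=> m hm; rewrite (ext_lt _ hm).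
  by apply: functional_extensionality => b; rewrite /mulop mulNr mulNr mulrN mulrA.
Qed.
End BracketInOmega.

Lemma claim_fieldType (K : fieldType) : claim K.
Proof.
move=> A n om hn hom; split; first exact: bracket_mu_inOmega.
move=> X hX; rewrite (bracket_mu_Diff1 hom hn) ?dOmega_koszul //.
by move=> i; apply: isDer_Diff1.
Qed.

Theorem theorem1 (R : realType) : claim R /\ claim R[i].
Proof. by split; apply: claim_fieldType. Qed.
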